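(* Let $H_\alpha=-\Delta_\alpha+V$ be the Schrödinger operator with periodic magnetic potential $\alpha$ and periodic electric potential $V$ on a periodic graph $\mathcal G$. Fix a basis $\{\mathbf c_1,\dots,\mathbf c_\beta\}$ of the cycle space of $\mathcal G_*$ such that $\tau(\mathbf c_1),\dots,\tau(\mathbf c_d)$ is the standard basis of $\mathbb Z^d$ and $\{\mathbf c_{d+1},\dots,\mathbf c_\beta\}$ is a basis of the space $\mathcal C^0$ of cycles of $\mathcal G_*$ with zero index, let $\mathcal P$ be the associated projection (see context), and put $k_o=-(\alpha(\mathbf c_1),\dots,\alpha(\mathbf c_d))$. (i) For every $n\in\mathbb N$ and $\tilde k\in\mathbb T^d$, $$\operatorname{Tr}H_\alpha^n(\tilde k+k_o)=\sum_{\mathbf c\in\widetilde{\mathcal C}_n}\omega(\mathbf c)e^{-i\phi_o(\mathbf c,\tilde k)}=\sum_{\mathbf c\in\widetilde{\mathcal C}_n}\omega(\mathbf c)\cos\phi_o(\mathbf c,\tilde k),\qquad \phi_o(\mathbf c,\tilde k)=\alpha(\mathcal P\mathbf c)+\langle\tau(\mathbf c),\tilde k\rangle,$$ or, in Fourier form, $\operatorname{Tr}H_\alpha^n(\tilde k+k_o)=\sum_{\mathrm m\in\mathbb Z^d,\|\mathrm m\|\le n\tau_+}\mathcal T^o_{\alpha,n,\mathrm m}e^{-i\langle\mathrm m,\tilde k\rangle}$ with $\mathcal T^o_{\alpha,n,\mathrm m}=\sum_{\mathbf c\in\widetilde{\mathcal C}_n^{\mathrm m}}\omega(\mathbf c)e^{-i\alpha(\mathcal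 P\mathbf c)}$, where $\tau_+=\max_{\mathbf e\in\mathcal A_*}\|\tau(\mathbf e)\|$. In particular, if $\beta=d$, then $\mathcal P\mathbf c=0$ for all $\mathbf c\in\widetilde{\mathcal C}$ and $\operatorname{Tr}H_\alpha^n(\tilde k+k_o)=\operatorname{Tr}H_0^n(\tilde k)$ for all $n\in\mathbb N$. (ii) If two periodic magnetic potentials $\alpha_1,\alpha_2$ have the same flux through each of the $\beta-d$ basis cycles $\mathbf c_{d+1},\dots,\mathbf c_\beta$ of $\mathcal C^0$, then $\sigma(H_{\alpha_1})=\sigma(H_{\alpha_2})$.
   Context: Let $\Gamma\subset\mathbb R^d$ be a lattice with basis $\mathfrak a_1,\dots,\mathfrak a_d$ and fundamental cell $\Omega=\{\sum_sx_s\mathfrak a_s:(x_s)\in[0,1)^d\}$. Let $\mathcal G=(\mathcal V,\mathcal E)$ be a connected, locally finite, infinite graph embedded in $\mathbb R^d$ (loops, multiple edges allowed), invariant under $\Gamma$-translations, with finite quotient $\mathcal G_*=(\mathcal V_*,\mathcal E_* )$; $\nu=\#\mathcal V_*$; Betti number $\beta=\#\mathcal E_*-\#\mathcal V_*+1$. Oriented edges $\mathcal A,\mathcal A_*$; $\underline{\mathbf e}$ inverse; $\varkappa_x$ = number of oriented edges starting at $x$. Edge index: $x=x_0+[x]$, $x_0\in\mathcal V\cap\Omega$, $[x]\in\Gamma$ with coordinates $[x]_{\mathbb A}\in\mathbb Z^d$; $\tau((x,y))=[y]_{\mathbb A}-[x]_{\mathbb A}$, defined on $\mathcal A_*$. Periodic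 magnetic potential $\alpha:\mathcal A\to\mathbb R$ ($\alpha(\underline{\mathbf e})=-\alpha(\mathbf e)$, $\Gamma$-invariant); $V$ real $\Gamma$-periodic. $H_\alpha=-\Delta_\alpha+V$, $\Delta_\alpha=\varkappa-A_\alpha$, $(A_\alpha f)_x=\sum_{\mathbf e=(x,y)\in\mathcal A}e^{i\alpha(\mathbf e)}f_y$; fiber operators $H_\alpha(k)=A_\alpha(k)-\varkappa+V$ on $\mathbb C^\nu$, $(A_\alpha(k)f)_x=\sum_{\mathbf e=(x,y)\in\mathcal A_*}e^{i(\alpha(\mathbf e)+\langle\tau(\mathbf e),k\rangle)}f_y$, $k\in\mathbb T^d=\mathbb R^d/(2\pi\mathbb Z)^d$; $\sigma(H_\alpha)=\bigcup_k\sigma(H_\alpha(k))$; $H_0$ is $H_\alpha$ with $\alpha=0$. Cycles: ordered sequences of oriented edges $(\mathbf e_1,\dots,\mathbf e_n)$ with $\mathbf e_s=(x_{s-1},x_s)$, $x_n=x_0$ (cyclic shifts distinct; backtracking allowed); index $\tau(\mathbf c)=\sum\tau(\mathbf e)$; flux $\alpha(\mathbf c)=(\sum\alpha(\mathbf e))\bmod 2\pi$; both extend additively to the integer cycle space (first homology with $\mathbb Z$ coefficients). Modified graph $\widetilde{\mathcal G}_*$: add at each $x\in\mathcal V_*$ one oriented loop $\mathbf e_x$ (single oriented edge) with $\tau(\mathbf e_x)=0$, $\alpha(\mathbf e_x)=0$; weights $\omega(\mathbf e)=1$ on $\mathcal A_*$, $\omega(\mathbf e_x)=V_x-\varkappa_x$,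 $\omega(\mathbf c)=\prod_s\omega(\mathbf e_s)$; $\widetilde{\mathcal C}$ is the cycle space of $\widetilde{\mathcal G}_*$, $\widetilde{\mathcal C}_n$ (resp. $\widetilde{\mathcal C}_n^{\mathrm m}$) the set of cycles of length $n$ (resp. and index $\mathrm m$). Such a basis $\mathbf c_1,\dots,\mathbf c_\beta$ exists, and $\{\mathbf c_1,\dots,\mathbf c_\beta\}\cup\{\mathbf e_x\}$ is a basis of $\widetilde{\mathcal C}$, so every $\mathbf c\in\widetilde{\mathcal C}$ is uniquely $\mathbf c=\sum_{s=1}^\beta n_s(\mathbf c)\mathbf c_s+\sum_x n_x(\mathbf c)\mathbf e_x$ with integer coefficients; the projection is $\mathcal P\mathbf c=\sum_{s=d+1}^\beta n_s(\mathbf c)\mathbf c_s\in\mathcal C^0$. *)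

From HB Require Import structures.
From mathcomp Require Import all_boot all_order all_algebra.
From mathcomp Require Import complex.
From mathcomp Require Import reals trigo.
From Stdlib Require Import ClassicalEpsilon.

Set Implicit Arguments.
Unset Strict Implicit.
Unset Printing Implicit Defensive.

Import Order.TTheory GRing.Theory Num.Theory.
Local Open Scope ring_scope.

(* The finite quotient graph G_* is given by a vertex type [Vt], a type [E]
   of (unoriented) edges with endpoints [src e] and [tgt e] (loops and
   multiple edges allowed).  The oriented edges A_* are [E * bool]:
   (e,true) is e oriented from src e to tgt e, (e,false) is its inverse. *)

Section QuotientGraph.
Variables (R : realType) (d : nat) (Vt E : finType)
          (src tgt : E -> Vt) (tau : E -> 'I_d -> int).

Definition osrc (a : E * bool) : Vt := if a.2 then src a.1 else tgt a.1.
Definition otgt (a : E * bool) : Vt := if a.2 then tgt a.1 else src a.1.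
Definition otau (a : E * bool) (i : 'I_d) : int :=
  if a.2 then tau a.1 i else - tau a.1 i.
Definition oalpha (alpha : E -> R) (a : E * bool) : R :=
  if a.2 then alpha a.1 else - alpha a.1.

Definition kappa (x : Vt) : nat := #|[pred a : E * bool | osrc a == x]|.

Definition expi (t : R) : R[i] := (cos t +i* sin t)%C.

Definition dotZR (m : 'I_d -> int) (k : 'I_d -> R) : R :=
  \sum_(i < d) (m i)%:~R * k i.

(* fiber operator H_alpha(k) = A_alpha(k) - kappa + V on C^nu,
   coordinates indexed through enum_val : 'I_#|Vt| -> Vt *)
Definition Hmat (alpha : E -> R) (V : Vt -> R) (k : 'I_d -> R)
  : 'M[R[i]]_#|Vt| :=
  \matrix_(i, j)
    (\sum_(a : E * bool | (osrc a == enum_val i) && (otgt a == enum_val j))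
        expi (oalpha alpha a + dotZR (otau a) k)
     + (if i == j then (V (enum_val i) - (kappa (enum_val i))%:R)%:C%C
        else 0)).

Definition in_spectrum (alpha : E -> R) (V : Vt -> R) (lam : R[i]) : Prop :=
  exists k : 'I_d -> R, eigenvalue (Hmat alpha V k) lam.

(* ---- modified graph: oriented edges of G_* plus one loop e_x at each x ---- *)
Definition Wt := (E * bool + Vt)%type.
Definition wsrc (w : Wt) : Vt := match w with inl a => osrc a | inr x => x end.
Definition wtgt (w : Wt) : Vt := match w with inl a => otgt a | inr x => x end.
Definition wtau (w : Wt) (i : 'I_d) : int :=
  match w with inl a => otau a i | inr _ => 0 end.
Definition wweight (V : Vt -> R) (w : Wt) : R :=
  match w with inl _ => 1 | inr x => V x - (kappa x)%:R end.

Definition closed_walk (s : seq Wt) : bool :=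
  cycle (fun a b => wtgt a == wsrc b) s.
Definition walk_weight (V : Vt -> R) (s : seq Wt) : R :=
  \prod_(w <- s) wweight V w.
Definition walk_tau (s : seq Wt) (i : 'I_d) : int := \sum_(w <- s) wtau w i.

(* integer 1-chains on G_*: functions E -> int (coefficient of the forward
   orientation); the part on G_* of the chain of a walk *)
Definition chain_of_walk (s : seq Wt) (e : E) : int :=
  (count_mem (inl (e, true)) s)%:Z - (count_mem (inl (e, false)) s)%:Z.

Definition is_cycle (f : E -> int) : Prop :=
  forall v : Vt,
    \sum_(e : E) f e * ((tgt e == v)%:Z - (src e == v)%:Z) = 0.

Definition chain_index (f : E -> int) (i : 'I_d) : int :=
  \sum_(e : E) f e * tau e i.
Definition chain_flux (alpha : E -> R) (f : E -> int) : R :=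
  \sum_(e : E) (f e)%:~R * alpha e.

Variable r : nat. (* beta = d + r *)

Definition comb (bt : 'I_d -> E -> int) (b0 : 'I_r -> E -> int)
  (nt : 'I_d -> int) (n0 : 'I_r -> int) (e : E) : int :=
  \sum_(i < d) nt i * bt i e + \sum_(j < r) n0 j * b0 j e.

Definition cycle_basis (bt : 'I_d -> E -> int) (b0 : 'I_r -> E -> int) : Prop :=
  [/\ forall i, is_cycle (bt i),
      forall j, is_cycle (b0 j),
      forall f, is_cycle f ->
        exists nt n0, forall e, f e = comb bt b0 nt n0 e
    & forall nt n0, (forall e, comb bt b0 nt n0 e = 0) ->
        (forall i, nt i = 0) /\ (forall j, n0 j = 0)].

Definition std_index (bt : 'I_d -> E -> int) : Prop :=
  forall i i', chain_index (bt i) i' = (i == i')%:Z.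

Definition zero_index_basis (b0 : 'I_r -> E -> int) : Prop :=
  [/\ forall j, is_cycle (b0 j) /\ (forall i, chain_index (b0 j) i = 0),
      forall f, is_cycle f -> (forall i, chain_index f i = 0) ->
        exists n0, forall e, f e = \sum_(j < r) n0 j * b0 j e
    & forall n0, (forall e, \sum_(j < r) n0 j * b0 j e = 0) ->
        forall j, n0 j = 0].

(* the (unique, under cycle_basis) coordinates of a cycle in the basis *)
Definition coords (bt : 'I_d -> E -> int) (b0 : 'I_r -> E -> int)
  (f : E -> int) : ('I_d -> int) * ('I_r -> int) :=
  epsilon (inhabits ((fun _ => 0), (fun _ => 0)))
    (fun p => forall e, f e = comb bt b0 p.1 p.2 e).

Definition projP (bt : 'I_d -> E -> int) (b0 : 'I_r -> E -> int)
  (f : E -> int) (e : E) : int :=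
  \sum_(j < r) (coords bt b0 f).2 j * b0 j e.

Definition phi_o (alpha : E -> R) bt b0 (s : seq Wt) (k : 'I_d -> R) : R :=
  chain_flux alpha (projP bt b0 (chain_of_walk s)) + dotZR (walk_tau s) k.

Definition k_o (alpha : E -> R) (bt : 'I_d -> E -> int) (i : 'I_d) : R :=
  - chain_flux alpha (bt i).

Definition Tcoef (alpha : E -> R) (V : Vt -> R) bt b0 (n : nat)
  (m : 'I_d -> int) : R[i] :=
  \sum_(t : n.-tuple Wt |
          closed_walk t && [forall i, walk_tau t i == m i])
     (walk_weight V t)%:C%C
       * expi (- chain_flux alpha (projP bt b0 (chain_of_walk t))).

Definition sqnormZ (m : 'I_d -> int) : int := \sum_(i < d) m i ^+ 2.
Definition tau2max : nat := \max_(e : E) `|sqnormZ (tau e)|%N.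

(* sum over the ball {m in Z^d : ||m|| <= n tau_+}: we enumerate the box
   [-N, N]^d with N := n * tau_+^2 (>= n tau_+, since tau_+^2 is a natural
   number), keeping exactly the m with ||m||^2 <= n^2 tau_+^2. *)
Definition box_pt (N : nat) (j : {ffun 'I_d -> 'I_(N.*2.+1)}) (i : 'I_d) : int :=
  (j i)%:Z - N%:Z.

Definition sum_ball (n : nat) (F : ('I_d -> int) -> R[i]) : R[i] :=
  let N := (n * tau2max)%N in
  \sum_(j : {ffun 'I_d -> 'I_(N.*2.+1)} |
          sqnormZ (box_pt j) <= (n ^ 2 * tau2max)%N%:Z)
     F (box_pt j).

End QuotientGraph.

Definition adjG (Vt E : finType) (src tgt : E -> Vt) : rel Vt :=
  fun u v => [exists e, ((src e == u) && (tgt e == v))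
                        || ((src e == v) && (tgt e == u))].

(* H_alpha(k) is the weighted adjacency matrix of the modified graph: an
   oriented edge e carries e^{i(alpha(e) + <tau(e), k>)} and the loop e_x
   carries V_x - kappa_x.  Hence Tr H_alpha(k)^n is the sum, over closed walks
   c of length n, of omega(c) e^{i(alpha(c) + <tau(c), k>)}.  Expanding the
   cycle of c in the basis gives
     alpha(c) = sum_i tau_i(c) alpha(c_i) + alpha(Pc),
   and the shift k = kt + k_o cancels the first sum, leaving phi_o(c, kt).  As
   H_alpha(k) is Hermitian the trace is real, which yields the e^{-i phi_o} and
   cosine forms; grouping walks by index, which Cauchy-Schwarz confines to the
   ball of radius n tau_+, yields the Fourier form.
   For (ii), alpha1 - alpha2 has flux in 2piZ through every cycle of zero
   index, so after the shift by k_o(alpha1 - alpha2) the phase of every closed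
   walk is in 2piZ.  On a connected graph the phase is then, modulo 2pi, the
   gradient of a potential theta obtained by summing phases along paths from a
   root, and diag(e^{i theta}) intertwines H_alpha2(k) with
   H_alpha1(k + k_o). *)

From HB Require Import structures.
From mathcomp Require Import all_boot all_order all_algebra.
From mathcomp Require Import complex.
From mathcomp Require Import reals trigo.
From Stdlib Require Import ClassicalEpsilon.
From mathcomp Require Import lra zify.

Set Implicit Arguments.
Unset Strict Implicit.
Unset Printing Implicit Defensive.

Import Order.TTheory GRing.Theory Num.Theory.
Local Open Scope ring_scope.

Section Expi.
Variable R : realType.

Lemma expiD (a b : R) : expi (a + b) = expi a * expi b.
Proof.
rewrite /expi cosD sinD [RHS]/GRing.mul /=; congr (_ +i* _)%C; exact: addrC.
Qed.

Lemma expi0 : expi (0 : R) = 1.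
Proof. by rewrite /expi cos0 sin0. Qed.

Lemma expiN (a : R) : expi (- a) = ((expi a)^*)%C.
Proof. by rewrite /expi cosN sinN. Qed.

Lemma expi_neq0 (a : R) : expi a != 0.
Proof.
apply/eqP => Ha; have := oner_neq0 R[i].
by rewrite -expi0 -(subrr a) expiD Ha mul0r eqxx.
Qed.

Lemma expi_2pi_int (z : int) : expi (z%:~R * (pi *+ 2) : R) = 1.
Proof.
have expi_2pi_nat (n : nat) : expi (n%:R * (pi *+ 2) : R) = 1.
  elim: n => [|n IHn]; first by rewrite mul0r expi0.
  by rewrite -addn1 natrD mulrDl mul1r expiD IHn mul1r /expi cos2pi sin2pi.
case: z => n; first exact: expi_2pi_nat.
by rewrite NegzE mulrNz mulNr expiN expi_2pi_nat conjc1.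
Qed.

Lemma expiDN (a : R) : expi a + expi (- a) = 2%:R * (cos a)%:C%C.
Proof.
rewrite /expi cosN sinN [LHS]/GRing.add /= subrr.
rewrite -[2%:R](rmorph_nat (real_complex R)) -rmorphM /=.
by rewrite /real_complex_def mulr_natl mulr2n.
Qed.

End Expi.

(** * Traces as sums over closed walks *)

Section Walks.
Variables (T : eqType) (W : Type) (s t : W -> T).

Fixpoint is_walk (x : T) (p : seq W) (y : T) : bool :=
  if p is w :: p' then (s w == x) && is_walk (t w) p' y else x == y.

Definition consecutive (a b : W) : bool := t a == s b.

Lemma is_walk_cat x p1 y p2 z :
  is_walk x p1 y -> is_walk y p2 z -> is_walk x (p1 ++ p2) z.
Proof.
elim: p1 x => [|w p1 IHp] x /=; first by move=> /eqP ->.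
by case/andP=> -> /IHp; apply.
Qed.

Lemma is_walk_path w p w' :
  is_walk (t w) p (s w') = path consecutive w (rcons p w').
Proof.
elim: p w => [|v p IHp] w /=; first by rewrite /consecutive andbT.
by rewrite IHp /consecutive eq_sym.
Qed.

Lemma is_walk_closed x w p :
  is_walk x (w :: p) x = (s w == x) && cycle consecutive (w :: p).
Proof. by rewrite /= -is_walk_path; case: eqP => // <-. Qed.

Lemma path_map_tgt w p w' :
  path consecutive w (rcons p w') -> map t (w :: p) = map s (rcons p w').
Proof.
elim: p w => [|v p IHp] w /=; first by rewrite /consecutive andbT => /eqP ->.
by case/andP=> /eqP -> /IHp /= ->.
Qed.

Lemma cycle_map_tgt p : cycle consecutive p -> map t p = map s (rot 1 p).
Proof. by case: p => [|w p] // /path_map_tgt; rewrite rot1_cons. Qed.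

End Walks.

Lemma big_tuple_cons (C : nmodType) (W : finType) n
    (F : n.+1.-tuple W -> C) :
  \sum_(q : n.+1.-tuple W) F q
  = \sum_(w : W) \sum_(p : n.-tuple W) F (cons_tuple w p).
Proof.
rewrite pair_big /=.
rewrite (reindex (fun wp : W * n.-tuple W => cons_tuple wp.1 wp.2)) //=.
exists (fun q => (thead q, behead_tuple q)) => [[w p] _ | q _] /=.
  by congr pair; apply: val_inj.
by apply: val_inj => /=; rewrite [in RHS](tuple_eta q).
Qed.

Section WeightedAdjacency.
Variables (C : comNzRingType) (W : finType) (m : nat) (s t : W -> 'I_m)
  (c : W -> C).

Definition wadj : 'M[C]_m := \sum_(w : W) c w *: delta_mx (s w) (t w).

Lemma wadj_pow_coef n x y :
  (wadj ^+ n) x y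
  = \sum_(p : n.-tuple W | is_walk s t x p y) \prod_(w <- p) c w.
Proof.
elim: n x y => [|n IHn] x y.
  rewrite expr0 mxE; case: eqP => [<-|/eqP xy].
    by rewrite (big_pred1 [tuple]) ?big_nil // => p; rewrite [p]tuple0 /= !eqxx.
  by rewrite big_pred0 // => p; rewrite [p]tuple0 /= (negbTE xy).
rewrite exprS -mulmxE mxE [RHS]big_mkcond big_tuple_cons.
under eq_bigr do rewrite summxE mulr_suml.
rewrite exchange_big /=; apply: eq_bigr => w _.
rewrite (bigD1 (t w)) //= big1 ?addr0 => [|j /negPf tw_j]; last first.
  by rewrite !mxE tw_j andbF mulr0 mul0r.
rewrite !mxE !eqxx andbT IHn mulr_sumr big_mkcond /=; apply: eq_bigr => p _.
rewrite big_cons eq_sym; case: (s w == x); case: (is_walk s t (t w) p y);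
  by rewrite /= ?mulr1 ?mulr0 ?mul0r.
Qed.

Lemma mxtrace_wadj_pow n :
  \tr (wadj ^+ n.+1)
  = \sum_(p : n.+1.-tuple W | cycle (consecutive s t) p) \prod_(w <- p) c w.
Proof.
rewrite /mxtrace; under eq_bigr do rewrite wadj_pow_coef big_mkcond.
rewrite exchange_big [RHS]big_mkcond; apply: eq_bigr => -[[|w p] size_p] _ //.
under eq_bigr => i _ do rewrite (is_walk_closed s t i w p).
case: (cycle _ _); last by rewrite big1 // => i _; rewrite andbF.
by rewrite -big_mkcond (big_pred1 (s w)) // => i; rewrite andbT.
Qed.

End WeightedAdjacency.

Lemma eq_enum_rank (T : finType) (i : 'I_#|T|) (x : T) :
  (i == enum_rank x) = (x == enum_val i).
Proof. by rewrite eq_sym -(inj_eq enum_val_inj) enum_rankK. Qed.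

Section FiberOperator.
Variables (R : realType) (d : nat) (Vt E : finType) (src tgt : E -> Vt)
  (tau : E -> 'I_d -> int).

Local Notation W := (Wt Vt E).
Local Notation wsrc := (wsrc src tgt).
Local Notation wtgt := (wtgt src tgt).

Definition wphase (al : E -> R) (k : 'I_d -> R) (w : W) : R :=
  match w with inl a => oalpha al a + dotZR (otau tau a) k | inr _ => 0 end.

Definition wcoef (al : E -> R) (V : Vt -> R) (k : 'I_d -> R) (w : W) : R[i] :=
  (wweight src tgt V w)%:C%C * expi (wphase al k w).

Lemma Hmat_wadj al V k :
  Hmat src tgt tau al V k
  = wadj (enum_rank \o wsrc) (enum_rank \o wtgt) (wcoef al V k).
Proof.
apply/matrixP => i j; rewrite !mxE summxE big_sumType /=; congr (_ + _).
  rewrite [LHS]big_mkcond; apply: eq_bigr => a _.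
  rewrite !mxE /= !eq_enum_rank /wcoef /= rmorph1 mul1r.
  by case: (_ && _); rewrite ?mulr1 ?mulr0.
rewrite (bigD1 (enum_val i)) //= big1 ?addr0 => [|x /negPf xi]; last first.
  by rewrite !mxE /= !eq_enum_rank xi mulr0.
rewrite !mxE /= !eq_enum_rank eqxx /wcoef /= expi0 mulr1 (inj_eq enum_val_inj).
by case: (i == j); rewrite ?mulr1 ?mulr0.
Qed.

Lemma mxtrace_Hmat_pow al V k n :
  \tr (Hmat src tgt tau al V k ^+ n.+1)
  = \sum_(t : n.+1.-tuple W | closed_walk src tgt t)
      (walk_weight src tgt V t)%:C%C * expi (\sum_(w <- t) wphase al k w).
Proof.
rewrite Hmat_wadj mxtrace_wadj_pow.
have consecutiveE : consecutive (enum_rank \o wsrc) (enum_rank \o wtgt)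
                    =2 (fun a b => wtgt a == wsrc b).
  by move=> a b; rewrite /consecutive /= (inj_eq enum_rank_inj).
apply: eq_big => [t|t _]; first by rewrite /closed_walk (eq_cycle consecutiveE).
rewrite /wcoef big_split /= /walk_weight rmorph_prod.
by rewrite (big_morph _ (@expiD R) (@expi0 R)).
Qed.

End FiberOperator.

(** * Flux and index of closed walks *)

Section WalkChains.
Variables (R : realType) (d : nat) (Vt E : finType) (src tgt : E -> Vt)
  (tau : E -> 'I_d -> int).

Local Notation W := (Wt Vt E).
Local Notation wsrc := (wsrc src tgt).
Local Notation wtgt := (wtgt src tgt).

Definition wval (M : zmodType) (g : E -> M) (w : W) : M :=
  match w with inl a => if a.2 then g a.1 else - g a.1 | inr _ => 0 end.

Lemma chain_of_walk_cons (w : W) p e :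
  chain_of_walk (w :: p) e
  = chain_of_walk p e + ((w == inl (e, true))%:Z - (w == inl (e, false))%:Z).
Proof. rewrite /chain_of_walk /=; lia. Qed.

Lemma sum_chain_of_walk (M : zmodType) (g : E -> M) (p : seq W) :
  \sum_e g e *~ chain_of_walk p e = \sum_(w <- p) wval g w.
Proof.
elim: p => [|w p IHp]; first by rewrite big_nil big1.
under eq_bigr do rewrite chain_of_walk_cons mulrzDr.
rewrite big_split /= IHp big_cons addrC; congr (_ + _).
case: w => [[e0 b]|x] /=; last by rewrite big1 // => e _; rewrite subrr mulr0z.
rewrite (bigD1 e0) //= big1 ?addr0 => [|e /negPf e0e]; last first.
  have [-> ->] : (inl (e0, b) == inl (e, true) :> W) = false
                 /\ (inl (e0, b) == inl (e, false) :> W) = false.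
    by split; apply/negbTE/eqP => -[/eqP]; rewrite eq_sym e0e.
  by rewrite subrr mulr0z.
have ne_orient : (inl (e0, true) == inl (e0, false) :> W) = false.
  by apply/negbTE/eqP => -[].
by case: b; rewrite !eqxx /= ?ne_orient 1?eq_sym ?ne_orient /=
  ?subr0 ?sub0r ?mulrN1z.
Qed.

Lemma chain_flux_walk (al : E -> R) (p : seq W) :
  chain_flux al (chain_of_walk p) = \sum_(w <- p) wval al w.
Proof.
by rewrite -sum_chain_of_walk; apply: eq_bigr => e _; rewrite mulrzl.
Qed.

Lemma chain_index_walk (p : seq W) i :
  chain_index tau (chain_of_walk p) i = walk_tau tau p i.
Proof.
transitivity (\sum_e tau e i *~ chain_of_walk p e).
  by apply: eq_bigr => e _; rewrite mulrzz mulrC.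
by rewrite sum_chain_of_walk; apply: eq_bigr => -[[e []]|x].
Qed.

Lemma closed_walk_is_cycle (p : seq W) :
  closed_walk src tgt p -> is_cycle src tgt (chain_of_walk p).
Proof.
move=> p_closed v.
transitivity (\sum_e ((tgt e == v)%:Z - (src e == v)%:Z) *~ chain_of_walk p e).
  by apply: eq_bigr => e _; rewrite mulrzz mulrC.
rewrite sum_chain_of_walk.
transitivity (\sum_(w <- p) ((wtgt w == v)%:Z - (wsrc w == v)%:Z)).
  by apply: eq_bigr => -[[e []]|x] _ //=; rewrite ?opprB ?subrr.
rewrite sumrB -(big_map wtgt xpredT (fun x => (x == v)%:Z)).
rewrite (cycle_map_tgt p_closed) big_map (perm_big p) ?subrr //.
by rewrite perm_rot.
Qed.

Lemma dotZR_walk_tau (p : seq W) (k : 'I_d -> R) :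
  dotZR (walk_tau tau p) k = \sum_(w <- p) dotZR (wtau tau w) k.
Proof.
rewrite /dotZR exchange_big /=; apply: eq_bigr => i _.
rewrite /walk_tau (big_morph _ (@intrD R) (mulr0z 1)) mulr_suml.
by apply: eq_bigr.
Qed.

Lemma sum_wphase (al : E -> R) (k : 'I_d -> R) (p : seq W) :
  \sum_(w <- p) wphase tau al k w
  = chain_flux al (chain_of_walk p) + dotZR (walk_tau tau p) k.
Proof.
rewrite chain_flux_walk dotZR_walk_tau -big_split.
apply: eq_bigr => -[a|x] _ //=.
by rewrite /dotZR big1 ?addr0 // => i _; rewrite mul0r.
Qed.

End WalkChains.

Section ChainLinearity.
Variables (R : realType) (d : nat) (E : finType) (tau : E -> 'I_d -> int).

Lemma chain_flux_lincomb p (c : 'I_p -> int) (g : 'I_p -> E -> int)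
    (al : E -> R) :
  chain_flux al (fun e => \sum_j c j * g j e)
  = \sum_j (c j)%:~R * chain_flux al (g j).
Proof.
rewrite /chain_flux; under eq_bigr do rewrite rmorph_sum mulr_suml.
rewrite exchange_big; apply: eq_bigr => j _ /=; rewrite mulr_sumr.
by apply: eq_bigr => e _; rewrite intrM mulrA.
Qed.

Lemma chain_index_lincomb p (c : 'I_p -> int) (g : 'I_p -> E -> int) i :
  chain_index tau (fun e => \sum_j c j * g j e) i
  = \sum_j c j * chain_index tau (g j) i.
Proof.
rewrite /chain_index; under eq_bigr do rewrite mulr_suml.
rewrite exchange_big; apply: eq_bigr => j _ /=; rewrite mulr_sumr.
by apply: eq_bigr => e _; rewrite mulrA.
Qed.

Lemma chain_fluxB (a1 a2 : E -> R) f :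
  chain_flux (fun e => a1 e - a2 e) f = chain_flux a1 f - chain_flux a2 f.
Proof.
by rewrite /chain_flux -sumrB; apply: eq_bigr => e _; rewrite mulrBr.
Qed.

End ChainLinearity.

Section CycleBasis.
Variables (R : realType) (d : nat) (Vt E : finType) (src tgt : E -> Vt)
  (tau : E -> 'I_d -> int) (r : nat) (bt : 'I_d -> E -> int)
  (b0 : 'I_r -> E -> int).
Hypotheses (basis_bt_b0 : cycle_basis src tgt bt b0)
  (std_bt : std_index tau bt) (basis_b0 : zero_index_basis src tgt tau b0).

Local Notation W := (Wt Vt E).
Local Notation comb := (comb bt b0).
Local Notation coords := (coords bt b0).

Lemma coordsP f : is_cycle src tgt f ->
  forall e, f e = comb (coords f).1 (coords f).2 e.
Proof.
move=> f_cycle.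
apply: (epsilon_spec _ (fun p => forall e, f e = comb p.1 p.2 e)).
have [_ _ span _] := basis_bt_b0; have [nt [n0 f_eq]] := span f f_cycle.
by exists (nt, n0).
Qed.

Lemma chain_index_comb nt n0 i : chain_index tau (comb nt n0) i = nt i.
Proof.
have [b0_zero _ _] := basis_b0.
rewrite /chain_index /comb; under eq_bigr do rewrite mulrDl.
rewrite big_split /= -!/(chain_index tau _ i) !chain_index_lincomb.
rewrite [X in _ + X]big1 ?addr0 => [|j _]; last first.
  by rewrite (proj2 (b0_zero j)) mulr0.
rewrite (bigD1 i) //= big1 ?addr0 => [|i' /negPf i'i]; last first.
  by rewrite std_bt i'i mulr0.
by rewrite std_bt eqxx mulr1.
Qed.

Lemma chain_flux_comb (al : E -> R) nt n0 :
  chain_flux al (comb nt n0)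
  = \sum_i (nt i)%:~R * chain_flux al (bt i)
    + \sum_j (n0 j)%:~R * chain_flux al (b0 j).
Proof.
rewrite -!chain_flux_lincomb /chain_flux -big_split /=.
by apply: eq_bigr => e _; rewrite /comb intrD mulrDl.
Qed.

Lemma chain_flux_projP (al : E -> R) f :
  chain_flux al (projP bt b0 f)
  = \sum_j ((coords f).2 j)%:~R * chain_flux al (b0 j).
Proof. exact: chain_flux_lincomb. Qed.

Lemma chain_flux_closed_walk (al : E -> R) (p : seq W) :
  closed_walk src tgt p ->
  chain_flux al (chain_of_walk p)
  = \sum_i (walk_tau tau p i)%:~R * chain_flux al (bt i)
    + chain_flux al (projP bt b0 (chain_of_walk p)).
Proof.
move=> /closed_walk_is_cycle /coordsP p_comb.
have coords_tau i : (coords (chain_of_walk p)).1 i = walk_tau tau p i.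
  rewrite -chain_index_walk -(chain_index_comb _ (coords (chain_of_walk p)).2).
  by apply: eq_bigr => e _; rewrite -p_comb.
rewrite chain_flux_projP; under eq_bigr => i _ do rewrite -coords_tau.
by rewrite -chain_flux_comb; apply: eq_bigr => e _; rewrite -p_comb.
Qed.

Lemma sum_wphase_shift (al : E -> R) (kt : 'I_d -> R) (p : seq W) :
  closed_walk src tgt p ->
  \sum_(w <- p) wphase tau al (fun i => kt i + k_o al bt i) w
  = phi_o tau al bt b0 p kt.
Proof.
move=> p_closed; rewrite sum_wphase (chain_flux_closed_walk al p_closed) /phi_o.
have -> : dotZR (walk_tau tau p) (fun i => kt i + k_o al bt i)
          = dotZR (walk_tau tau p) kt
            - \sum_i (walk_tau tau p i)%:~R * chain_flux al (bt i).
  rewrite /dotZR -sumrN -big_split.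
  by apply: eq_bigr => i _; rewrite mulrDr mulrN.
lra.
Qed.

End CycleBasis.

(** * Hermitian symmetry *)

Lemma map_mxX (R1 R2 : comNzRingType) (f : {rmorphism R1 -> R2}) m
    (A : 'M[R1]_m) n :
  map_mx f (A ^+ n) = map_mx f A ^+ n.
Proof.
elim: n => [|n IHn]; first by rewrite !expr0 map_mx1.
by rewrite !exprS -!mulmxE map_mxM IHn.
Qed.

Lemma trmxX (C : comNzRingType) m (A : 'M[C]_m) n : (A ^+ n)^T = A^T ^+ n.
Proof.
elim: n => [|n IHn]; first by rewrite !expr0 trmx1.
by rewrite exprS exprSr -!mulmxE trmx_mul IHn.
Qed.

Lemma mxtrace_pow_conj (R : realType) m (A : 'M[R[i]]_m) n :
  A^T = map_mx conjc A -> ((\tr (A ^+ n))^*)%C = \tr (A ^+ n).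
Proof.
move=> A_herm.
by rewrite -(trace_map_mx conjc) map_mxX -A_herm -trmxX mxtrace_tr.
Qed.

Definition flipa (E : Type) (a : E * bool) : E * bool := (a.1, ~~ a.2).

Lemma flipaK (E : Type) : involutive (@flipa E).
Proof. by case=> e []. Qed.

Section Hermitian.
Variables (R : realType) (d : nat) (Vt E : finType) (src tgt : E -> Vt)
  (tau : E -> 'I_d -> int).

Lemma phase_flipa (al : E -> R) (k : 'I_d -> R) (a : E * bool) :
  oalpha al (flipa a) + dotZR (otau tau (flipa a)) k
  = - (oalpha al a + dotZR (otau tau a) k).
Proof.
rewrite opprD /dotZR -sumrN; congr (_ + _).
  by case: a => e [] /=; rewrite ?opprK.
by apply: eq_bigr => i _; case: a => e [] /=; rewrite ?intrN ?mulNr ?opprK.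
Qed.

Lemma Hmat_trmx al V k :
  (Hmat src tgt tau al V k)^T = map_mx (@conjc R) (Hmat src tgt tau al V k).
Proof.
apply/matrixP => i j.
rewrite !mxE (rmorphD (@conjc R)) (rmorph_sum (@conjc R)) /=.
congr (_ + _).
  rewrite (reindex_inj (can_inj (@flipaK E))) /=.
  apply: eq_big => [[e []]|a _]; rewrite /= 1?andbC //.
  by rewrite phase_flipa expiN.
by case: eqVneq => [->|_]; rewrite ?conjc_real ?conjc0.
Qed.

End Hermitian.

(** * The trace formulas *)

Lemma sqr_sum_le (R : realDomainType) n (a : 'I_n -> R) :
  (\sum_i a i) ^+ 2 <= n%:R * \sum_i a i ^+ 2.
Proof.
have sum_sqr_diff_ge0 : 0 <= \sum_(i < n) \sum_(j < n) (a i - a j) ^+ 2.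
  by apply: sumr_ge0 => i _; apply: sumr_ge0 => j _; exact: sqr_ge0.
have sum_sqr_diff_row i : \sum_(j < n) (a i - a j) ^+ 2
    = a i ^+ 2 *+ n - (a i * \sum_j a j) *+ 2 + \sum_j a j ^+ 2.
  under eq_bigr do rewrite sqrrB.
  rewrite big_split sumrB /= sumr_const card_ord; congr (_ - _ + _).
  by rewrite mulr_sumr sumrMnl.
move: sum_sqr_diff_ge0; under eq_bigr do rewrite sum_sqr_diff_row.
rewrite big_split sumrB /= sumr_const card_ord !sumrMnl -mulr_suml -expr2.
by rewrite addrAC -mulr2n subr_ge0 ler_pMn2r // mulr_natl.
Qed.

Lemma sqnormZ_ge0 d (m : 'I_d -> int) : 0 <= sqnormZ m.
Proof. by apply: sumr_ge0 => i _; exact: sqr_ge0. Qed.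

Section IndexBounds.
Variables (d : nat) (Vt E : finType) (tau : E -> 'I_d -> int).

Local Notation W := (Wt Vt E).
Local Notation tau2 := (tau2max tau).

Lemma sqnormZ_wtau (w : W) : sqnormZ (wtau tau w) <= tau2%:Z.
Proof.
case: w => [[e b]|x] /=; last first.
  by rewrite /sqnormZ big1 // => i _; rewrite expr0n.
have -> : sqnormZ (otau tau (e, b)) = sqnormZ (tau e).
  by apply: eq_bigr => i _; rewrite /otau; case: b; rewrite ?sqrrN.
rewrite -(gez0_abs (sqnormZ_ge0 (tau e))) lez_nat.
exact: (leq_bigmax (F := fun e => `|sqnormZ (tau e)|%N) e).
Qed.

Lemma sqnormZ_walk_tau n (t : n.-tuple W) :
  sqnormZ (walk_tau tau t) <= (n ^ 2 * tau2)%N%:Z.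
Proof.
apply: le_trans (_ : \sum_i n%:Z * \sum_(w <- t) wtau tau w i ^+ 2 <= _).
  by apply: ler_sum => i _; rewrite /walk_tau !big_tuple -natz sqr_sum_le.
have -> : (n ^ 2 * tau2)%N%:Z = n%:Z * (n * tau2)%N%:Z.
  by rewrite -PoszM mulnA mulnn.
rewrite -mulr_sumr exchange_big /= ler_wpM2l //.
apply: le_trans (_ : \sum_(w <- t) tau2%:Z <= _).
  by apply: ler_sum => w _; exact: sqnormZ_wtau.
by rewrite big_tuple sumr_const card_ord -mulr_natl natz PoszM.
Qed.

Lemma abs_walk_tau_le n (t : n.-tuple W) i :
  `|walk_tau tau t i| <= (n * tau2)%N%:Z.
Proof.
have sqr_le : walk_tau tau t i ^+ 2 <= (n ^ 2 * tau2)%N%:Z.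
  apply: le_trans (sqnormZ_walk_tau t).
  rewrite /sqnormZ (bigD1 i) //= lerDl.
  by apply: sumr_ge0 => j _; exact: sqr_ge0.
rewrite -ler_sqr ?nnegrE // real_normK ?num_real // (le_trans sqr_le) //.
rewrite -[in X in _ <= X]natz -natrX natz lez_nat expnMn leq_mul2l.
apply/orP; right.
by case: tau2 => // T'; rewrite expnS leq_pmulr.
Qed.

End IndexBounds.

Section BoxIndex.
Variables (d : nat) (Vt E : finType) (tau : E -> 'I_d -> int) (n : nat).

Local Notation W := (Wt Vt E).
Local Notation N := (n * tau2max tau)%N.

Definition box_index (t : n.-tuple W) : {ffun 'I_d -> 'I_N.*2.+1} :=
  [ffun i => inord (absz (walk_tau tau t i + N%:Z))].

Lemma box_index_val (t : n.-tuple W) i :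
  box_index t i = absz (walk_tau tau t i + N%:Z) :> nat.
Proof. by rewrite ffunE inordK //; have := abs_walk_tau_le tau t i; lia. Qed.

Lemma box_pt_index (t : n.-tuple W) : box_pt (box_index t) =1 walk_tau tau t.
Proof.
move=> i; rewrite /box_pt box_index_val gez0_abs ?addrK //.
by have := abs_walk_tau_le tau t i; lia.
Qed.

Lemma box_pt_eq_walk_tau (t : n.-tuple W) j :
  [forall i, walk_tau tau t i == box_pt j i] = (j == box_index t).
Proof.
apply/forallP/eqP => [t_j|-> i]; last by rewrite box_pt_index.
apply/ffunP => i; apply: val_inj; rewrite /= box_index_val (eqP (t_j i)).
by rewrite /box_pt subrK absz_nat.
Qed.

End BoxIndex.

Section TraceFormula.
Variables (R : realType) (d : nat) (Vt E : finType) (src tgt : E -> Vt)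
  (tau : E -> 'I_d -> int) (V : Vt -> R) (r : nat) (bt : 'I_d -> E -> int)
  (b0 : 'I_r -> E -> int).
Hypotheses (basis_bt_b0 : cycle_basis src tgt bt b0)
  (std_bt : std_index tau bt) (basis_b0 : zero_index_basis src tgt tau b0).
Variables (al : E -> R) (kt : 'I_d -> R).

Local Notation W := (Wt Vt E).
Local Notation H := (Hmat src tgt tau al V (fun i => kt i + k_o al bt i)).
Local Notation phi := (phi_o tau al bt b0).

Lemma mxtrace_Hmat_pow_phi n :
  \tr (H ^+ n.+1) = \sum_(t : n.+1.-tuple W | closed_walk src tgt t)
                      (walk_weight src tgt V t)%:C%C * expi (phi t kt).
Proof.
rewrite mxtrace_Hmat_pow; apply: eq_bigr => t t_closed.
by rewrite (sum_wphase_shift basis_bt_b0 std_bt basis_b0).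
Qed.

Lemma mxtrace_Hmat_pow_phiN n :
  \tr (H ^+ n.+1) = \sum_(t : n.+1.-tuple W | closed_walk src tgt t)
                      (walk_weight src tgt V t)%:C%C * expi (- phi t kt).
Proof.
rewrite -(mxtrace_pow_conj _ (Hmat_trmx src tgt tau al V _)).
rewrite mxtrace_Hmat_pow_phi.
rewrite rmorph_sum; apply: eq_bigr => t _.
by rewrite rmorphM /= expiN oppr0.
Qed.

Lemma mxtrace_Hmat_pow_cos n :
  \tr (H ^+ n.+1) = \sum_(t : n.+1.-tuple W | closed_walk src tgt t)
                      (walk_weight src tgt V t * cos (phi t kt))%:C%C.
Proof.
apply: (@mulfI _ (2%:R : R[i])); first by rewrite pnatr_eq0.
rewrite mulr_natl mulr2n {1}mxtrace_Hmat_pow_phi mxtrace_Hmat_pow_phiN.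
rewrite -big_split mulr_sumr; apply: eq_bigr => t _ /=.
by rewrite -mulrDr expiDN rmorphM mulrCA.
Qed.

Lemma mxtrace_Hmat_pow_fourier n :
  \tr (H ^+ n.+1)
  = sum_ball tau n.+1
      (fun m => Tcoef src tgt tau al V bt b0 n.+1 m * expi (- dotZR m kt)).
Proof.
rewrite mxtrace_Hmat_pow_phiN /sum_ball /Tcoef /=.
under eq_bigr do rewrite mulr_suml.
rewrite (exchange_big_dep xpredT) //= [LHS]big_mkcond; apply: eq_bigr => t _.
case: ifP => t_closed /=; last by rewrite big_pred0 // => j; rewrite andbF.
rewrite (big_pred1 (box_index tau t)) => [|j]; last first.
  rewrite box_pt_eq_walk_tau /=; case: eqP => [->|_]; rewrite ?andbF // andbT.
  have -> : sqnormZ (box_pt (box_index tau t)) = sqnormZ (walk_tau tau t).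
    by apply: eq_bigr => i _; rewrite box_pt_index.
  exact: sqnormZ_walk_tau.
rewrite -mulrA -expiD /phi_o opprD; congr (_ * expi (_ - _)).
by apply: eq_bigr => i _; rewrite box_pt_index.
Qed.

End TraceFormula.

(** * Gauge invariance of the spectrum *)

Lemma eigenvalue_intertwined (F : fieldType) m (A B D : 'M[F]_m) lam :
  D *m A = B *m D -> (forall v : 'rV_m, v *m D = 0 -> v = 0) ->
  eigenvalue B lam -> eigenvalue A lam.
Proof.
move=> DA_BD D_inj /eigenvalueP [v vB v_neq0].
apply/eigenvalueP; exists (v *m D).
  by rewrite -mulmxA DA_BD mulmxA vB scalemxAl.
by apply: contra v_neq0 => /eqP /D_inj ->.
Qed.

Section ReversedWalks.
Variables (R : realType) (d : nat) (Vt E : finType) (src tgt : E -> Vt)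
  (tau : E -> 'I_d -> int).

Local Notation W := (Wt Vt E).
Local Notation wsrc := (wsrc src tgt).
Local Notation wtgt := (wtgt src tgt).

Definition flipw (w : W) : W :=
  match w with inl a => inl (flipa a) | inr x => inr x end.

Definition revw (p : seq W) : seq W := rev (map flipw p).

Lemma is_walk_revw x p y :
  is_walk wsrc wtgt x p y -> is_walk wsrc wtgt y (revw p) x.
Proof.
elim: p x => [|w p IHp] x /=; first by move=> /eqP ->; rewrite /= eqxx.
case/andP => /eqP w_x /IHp p_rev; rewrite /revw map_cons rev_cons -cats1.
apply: (is_walk_cat p_rev) => /=.
by case: w w_x {p_rev} => [[e []]|z] /= <-; rewrite !eqxx.
Qed.

Lemma sum_wphase_revw (al : E -> R) k p :
  \sum_(w <- revw p) wphase tau al k w = - \sum_(w <- p) wphase tau al k w.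
Proof.
rewrite /revw big_rev big_map -sumrN; apply: eq_bigr => -[a|x] _ /=.
  exact: phase_flipa.
by rewrite oppr0.
Qed.

Lemma connect_is_walk x y : connect (adjG src tgt) x y ->
  exists p : seq W, is_walk wsrc wtgt x p y.
Proof.
move/connectP => [q xq ->] {y}.
elim: q x xq => [|z q IHq] x /=; first by exists [::]; rewrite /= eqxx.
case/andP => /existsP [e xz] /IHq [p p_walk].
case/orP: xz => /andP [/eqP e_src /eqP e_tgt].
  by exists (inl (e, true) :: p); rewrite /= /osrc /otgt /= e_src e_tgt eqxx.
by exists (inl (e, false) :: p); rewrite /= /osrc /otgt /= e_src e_tgt eqxx.
Qed.

Lemma is_walk_closed_walk x p :
  is_walk wsrc wtgt x p x -> p != [::] -> closed_walk src tgt p.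
Proof. by case: p => // w p; rewrite is_walk_closed => /andP []. Qed.

End ReversedWalks.

Definition in_2piZ (R : realType) (x : R) : Prop :=
  exists z : int, x = z%:~R * (pi *+ 2).

Section Gauge.
Variables (R : realType) (d : nat) (Vt E : finType) (src tgt : E -> Vt)
  (tau : E -> 'I_d -> int) (V : Vt -> R) (r : nat) (bt : 'I_d -> E -> int)
  (b0 : 'I_r -> E -> int).
Hypotheses (basis_bt_b0 : cycle_basis src tgt bt b0)
  (std_bt : std_index tau bt) (basis_b0 : zero_index_basis src tgt tau b0)
  (connected : forall x y : Vt, connect (adjG src tgt) x y).
Variables (a1 a2 : E -> R).
Hypothesis same_flux : forall j : 'I_r, exists z : int,
  chain_flux a1 (b0 j) = chain_flux a2 (b0 j) + z%:~R * (pi *+ 2).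

Local Notation W := (Wt Vt E).
Local Notation wsrc := (wsrc src tgt).
Local Notation wtgt := (wtgt src tgt).
Local Notation al := (fun e => a1 e - a2 e).
Local Notation phase := (wphase (Vt := Vt) tau al (k_o al bt)).

Lemma closed_walk_phase_2piZ p :
  closed_walk src tgt p -> in_2piZ (\sum_(w <- p) phase w).
Proof.
move=> p_closed; rewrite sum_wphase.
rewrite (chain_flux_closed_walk basis_bt_b0 std_bt basis_b0 _ p_closed).
have -> : dotZR (walk_tau tau p) (k_o al bt)
          = - \sum_i (walk_tau tau p i)%:~R * chain_flux al (bt i).
  by rewrite /dotZR -sumrN; apply: eq_bigr => i _; rewrite mulrN.
rewrite addrAC subrr add0r chain_flux_projP.
apply: (big_ind (@in_2piZ R)) => [|x y [zx ->] [zy ->]|j _].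
- by exists 0; rewrite mul0r.
- by exists (zx + zy); rewrite intrD mulrDl.
have [z flux_j] := same_flux j.
exists ((coords bt b0 (chain_of_walk p)).2 j * z).
by rewrite chain_fluxB flux_j addrAC subrr add0r intrM mulrA.
Qed.

Section Potential.
Variable root : Vt.

Definition path_from_root (v : Vt) : seq W :=
  epsilon (inhabits [::]) (fun p => is_walk wsrc wtgt root p v).

Lemma path_from_rootP v : is_walk wsrc wtgt root (path_from_root v) v.
Proof.
apply: (epsilon_spec _ (fun p => is_walk wsrc wtgt root p v)).
exact: connect_is_walk.
Qed.

Definition potential (v : Vt) : R := \sum_(w <- path_from_root v) phase w.

Lemma expi_potential_edge (a : E * bool) :
  expi (potential (otgt src tgt a))
  = expi (potential (osrc src tgt a)) * expi (phase (inl a)).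
Proof.
pose p := path_from_root (osrc src tgt a) ++ inl a
            :: revw (path_from_root (otgt src tgt a)).
have p_walk : is_walk wsrc wtgt root p root.
  apply: (is_walk_cat (path_from_rootP _)) => /=; rewrite eqxx /=.
  exact: is_walk_revw (path_from_rootP _).
have p_closed : closed_walk src tgt p.
  by apply: (is_walk_closed_walk p_walk); rewrite /p; case: (path_from_root _).
have [z] := closed_walk_phase_2piZ p_closed.
rewrite big_cat big_cons sum_wphase_revw -!/(potential _) => p_2pi.
rewrite -expiD -[LHS]mulr1 -(expi_2pi_int R z) -p_2pi -expiD; congr expi.
rewrite /=; lra.
Qed.

Lemma Hmat_gauge k :
  let u := \row_(i < #|Vt|) expi (potential (enum_val i)) in
  diag_mx u *m Hmat src tgt tau a1 V (fun i => k i + k_o al bt i)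
  = Hmat src tgt tau a2 V k *m diag_mx u.
Proof.
move=> u; rewrite mul_diag_mx mul_mx_diag; apply/matrixP => i j; rewrite !mxE.
rewrite mulrDr mulrDl; congr (_ + _); last first.
  by case: eqVneq => [->|_]; rewrite ?mulr0 ?mul0r // mulrC.
rewrite mulr_sumr mulr_suml; apply: eq_bigr => a /andP [/eqP <- /eqP <-].
rewrite expi_potential_edge mulrCA -!expiD; congr expi.
have oalphaB : oalpha al a = oalpha a1 a - oalpha a2 a.
  by case: a => e []; rewrite /oalpha /= ?opprD.
have dotZRD : dotZR (otau tau a) (fun i => k i + k_o al bt i)
              = dotZR (otau tau a) k + dotZR (otau tau a) (k_o al bt).
  by rewrite /dotZR -big_split; apply: eq_bigr => l _; rewrite mulrDr.
rewrite /= oalphaB dotZRD; lra.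
Qed.

End Potential.

Lemma in_spectrum_gauge lam :
  in_spectrum src tgt tau a2 V lam -> in_spectrum src tgt tau a1 V lam.
Proof.
case=> k k_eig; case: (pickP (@predT Vt)) => [root _|Vt_empty]; last first.
  exists k; suff -> : Hmat src tgt tau a1 V k = Hmat src tgt tau a2 V k by [].
  by apply/matrixP => i; have := Vt_empty (enum_val i).
exists (fun i => k i + k_o al bt i).
apply: eigenvalue_intertwined (Hmat_gauge root k) _ k_eig => v.
move/matrixP/(_ 0) => vD; apply/rowP => j; have := vD j.
rewrite mul_mx_diag !mxE => /eqP; rewrite mulf_eq0 (negbTE (expi_neq0 _)) orbF.
by move/eqP.
Qed.

End Gauge.

Lemma mxtrace_Hmat_pow_no_zero_index (R : realType) d (Vt E : finType)
    (src tgt : E -> Vt) (tau : E -> 'I_d -> int) (V : Vt -> R)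
    (bt : 'I_d -> E -> int) (b0 : 'I_0 -> E -> int) al kt n :
  cycle_basis src tgt bt b0 -> std_index tau bt ->
  zero_index_basis src tgt tau b0 ->
  \tr (Hmat src tgt tau al V (fun i => kt i + k_o al bt i) ^+ n.+1)
  = \tr (Hmat src tgt tau (fun _ => 0) V kt ^+ n.+1).
Proof.
move=> basis_bt_b0 std_bt basis_b0.
rewrite (mxtrace_Hmat_pow_phi _ basis_bt_b0 std_bt basis_b0) mxtrace_Hmat_pow.
apply: eq_bigr => t _; rewrite sum_wphase /phi_o; congr (_ * expi (_ + _)).
by rewrite /chain_flux !big1 // => e _; rewrite /projP ?big_ord0 (mul0r, mulr0).
Qed.

Theorem corollary3p7 (R : realType) (d r : nat) (Vt E : finType)
  (src tgt : E -> Vt) (tau : E -> 'I_d -> int) (V : Vt -> R)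
  (bt : 'I_d -> E -> int) (b0 : 'I_r -> E -> int) :
  (0 < d)%N ->
  (forall x y : Vt, connect (adjG src tgt) x y) ->
  cycle_basis src tgt bt b0 ->
  std_index tau bt ->
  zero_index_basis src tgt tau b0 ->
  (* (i) *)
  (forall (alpha : E -> R) (n : nat) (kt : 'I_d -> R), (0 < n)%N ->
     let k := fun i => kt i + k_o alpha bt i in
     [/\ \tr (Hmat src tgt tau alpha V k ^+ n)
           = \sum_(t : n.-tuple (Wt Vt E) | closed_walk src tgt t)
               (walk_weight src tgt V t)%:C%C
                 * expi (- phi_o tau alpha bt b0 t kt),
         \tr (Hmat src tgt tau alpha V k ^+ n)
           = \sum_(t : n.-tuple (Wt Vt E) | closed_walk src tgt t)
               (walk_weight src tgt V t
                  * cos (phi_o tau alpha bt b0 t kt))%:C%C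
       & \tr (Hmat src tgt tau alpha V k ^+ n)
           = sum_ball tau n (fun m =>
               Tcoef src tgt tau alpha V bt b0 n m * expi (- dotZR m kt))]) /\
  (* (i), case beta = d *)
  (r = 0%N ->
     (forall f : E -> int, is_cycle src tgt f ->
        forall e, projP bt b0 f e = 0) /\
     (forall (alpha : E -> R) (n : nat) (kt : 'I_d -> R), (0 < n)%N ->
        \tr (Hmat src tgt tau alpha V (fun i => kt i + k_o alpha bt i) ^+ n)
          = \tr (Hmat src tgt tau (fun _ => 0) V kt ^+ n))) /\
  (* (ii) *)
  (forall alpha1 alpha2 : E -> R,
     (forall j : 'I_r, exists z : int,
        chain_flux alpha1 (b0 j) = chain_flux alpha2 (b0 j) + z%:~R * (pi *+ 2)) ->
     forall lam : R[i], in_spectrum src tgt tau alpha1 V lam <-> in_spectrum src tgt tau alpha2 V lam).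
Proof.
move=> _ connected basis_bt_b0 std_bt basis_b0; split; [|split].
- move=> al [|n] kt // _ k.
  split; [exact: mxtrace_Hmat_pow_phiN | exact: mxtrace_Hmat_pow_cos
         | exact: mxtrace_Hmat_pow_fourier].
- move=> r0; subst r; split => [f _ e|al [|n] kt _]; first exact: big_ord0.
    by rewrite !expr0.
  exact: mxtrace_Hmat_pow_no_zero_index basis_bt_b0 std_bt basis_b0.
- move=> a1 a2 same_flux12 lam.
  have same_flux21 j : exists z : int,
      chain_flux a2 (b0 j) = chain_flux a1 (b0 j) + z%:~R * (pi *+ 2).
    by have [z ->] := same_flux12 j; exists (- z); rewrite intrN mulNr addrK.
  have gauge := in_spectrum_gauge basis_bt_b0 std_bt basis_b0 connected.
  by split; apply: gauge.
Qed.
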